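(* Let $n=2k+1$ be odd with $k\ge1$, $\theta=\frac{2\pi}{n+2}$, and for $L>0$ let $\mathcal{N}^{(L)}=\{(\ell_j,r_j): j\in[1:n]\}$ be given by $\ell_n=L$, $r_n=1$, and $$\ell_{2i-1}=\ell_{2i}=\frac{2\sin\theta\,\sin(i\theta)}{\cos(i\theta)-\cos((i+1)\theta)},\qquad r_{2i-1}=r_{2i}=\frac{2\sin\theta\,\sin(i\theta)}{\cos((i-1)\theta)-\cos(i\theta)},\qquad i\in[1:k].$$ Then $\mathsf{C}_1(\mathcal{N}_j)=1$ for all $j\in[1:n-1]$, $\mathsf{C}_1(\mathcal{N}^{(L)})=1$ for every $L>0$, $\mathsf{C}_n(\mathcal{N}^{(L)})\le r_1=2+2\cos\theta$ for every $L>0$, and $\lim_{L\to\infty}\mathsf{C}_n(\mathcal{N}^{(L)})=2+2\cos\theta$. Hence $\lim_{L\to\infty}\frac{\mathsf{C}_1(\mathcal{N}^{(L)})}{\mathsf{C}_n(\mathcal{N}^{(L)})}=\frac{1}{2+2\cos\left(\frac{2\pi}{n+2}\right)}$.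
   Context: For a network $\mathcal{N}=\{(\ell_i,r_i): i\in[1:n]\}$ with nonnegative link capacities, with complements inside $[1:n]$ and maxima over empty sets equal to $0$, the approximate capacity is $\mathsf{C}_n(\mathcal{N})=\max_{\boldsymbol\lambda}\min_{\Omega\subseteq[1:n]}\sum_{\mathcal{S}\subseteq[1:n]}\lambda_{\mathcal{S}}\big(\max_{i\in\mathcal{S}^c\cap\Omega^c}\ell_i+\max_{i\in\mathcal{S}\cap\Omega}r_i\big)$, the maximum being over schedules $\boldsymbol\lambda=(\lambda_{\mathcal{S}})_{\mathcal{S}\subseteq[1:n]}$, $\lambda_{\mathcal{S}}\ge0$, $\sum_{\mathcal{S}}\lambda_{\mathcal{S}}=1$. $\mathsf{C}_1(\mathcal{N}_i)=\frac{\ell_ir_i}{\ell_i+r_i}$ and $\mathsf{C}_1(\mathcal{N})=\max_i\mathsf{C}_1(\mathcal{N}_i)$. *)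

From Stdlib Require Import Reals ClassicalEpsilon.
From mathcomp Require Import all_boot.
Set Implicit Arguments. Unset Strict Implicit. Unset Printing Implicit Defensive.
Open Scope R_scope.

(* A network on n nodes: link capacities l i (= ell_i) and r i. Node i : 'I_n
   is node i+1 of the paper. *)

Definition is_schedule (n : nat) (lam : {set 'I_n} -> R) : Prop :=
  (forall S, 0 <= lam S) /\ \big[Rplus/0]_(S : {set 'I_n}) lam S = 1.

(* maxima over empty sets are 0 (capacities are nonnegative) *)
Definition cut_value (n : nat) (l r : 'I_n -> R) (lam : {set 'I_n} -> R)
    (Om : {set 'I_n}) : R :=
  \big[Rplus/0]_(S : {set 'I_n})
     (lam S * (\big[Rmax/0]_(i in (~: S) :&: (~: Om)) l i
               + \big[Rmax/0]_(i in S :&: Om) r i)).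

(* min over all Omega subseteq [1:n] (the set of Omega's is nonempty; the
   seed value is the term for Omega = [1:n], which is itself in the range) *)
Definition min_cut (n : nat) (l r : 'I_n -> R) (lam : {set 'I_n} -> R) : R :=
  \big[Rmin/cut_value l r lam setT]_(Om : {set 'I_n}) cut_value l r lam Om.

(* C_n(N) = max over schedules of min_cut; written as the least upper bound
   of the set of achievable values (which is attained, so equals the max). *)
Definition Cn_net (n : nat) (l r : 'I_n -> R) : R :=
  epsilon (inhabits 0)
    (fun c => is_lub (fun x => exists lam, is_schedule lam /\ x = min_cut l r lam) c).

Definition C1_link (l r : R) : R := l * r / (l + r).
Definition C1_net (n : nat) (l r : 'I_n -> R) : R :=
  \big[Rmax/0]_(i : 'I_n) C1_link (l i) (r i).

(* The construction, n = 2k+1 nodes; theta = 2 pi / (n+2). For 0-based index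
   j < 2k, the paper index is j+1 and i = j/2 + 1. The last node (j = 2k) has
   ell = L, r = 1. *)
Definition theta (k : nat) : R := 2 * PI / INR (k.*2.+1 + 2).

Definition ellN (k : nat) (L : R) (j : 'I_(k.*2.+1)) : R :=
  if (val j == k.*2)%N then L
  else let i := INR ((val j)./2.+1) in
       2 * sin (theta k) * sin (i * theta k)
         / (cos (i * theta k) - cos ((i + 1) * theta k)).

Definition rN (k : nat) (j : 'I_(k.*2.+1)) : R :=
  if (val j == k.*2)%N then 1
  else let i := INR ((val j)./2.+1) in
       2 * sin (theta k) * sin (i * theta k)
         / (cos ((i - 1) * theta k) - cos (i * theta k)).

Arguments ellN : clear implicits.
Arguments rN : clear implicits.

From Stdlib Require Import Reals ClassicalEpsilon Lra Lia Psatz.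
From HB Require Import structures.
From mathcomp Require Import all_boot zify.
Set Implicit Arguments. Unset Strict Implicit. Unset Printing Implicit Defensive.
Open Scope R_scope.

(* Put rho = 2 + 2 cos theta. Sum-to-product identities give
   ell_i r_i / (ell_i + r_i) = 1 for every pair, and ell_(i-1) + r_i = rho for
   i in [1:k+1], where ell_0 = 0 and node n acts as an extra pair with
   r_(k+1) = 1. Hence C_1 = 1, and the cut Omega = [1:n] gives
   C_n <= max_j r_j = rho. Conversely, let the relays alternate between two
   states X and Y, adapted to two interleaved chains of pairs, and stay silent
   with a small probability d: a cut containing node n loses rho along each
   chain, and a cut avoiding node n loses L during silence, so that
   C_n >= (1 - d) rho as soon as d L >= rho. *)

HB.instance Definition _ := Monoid.isComLaw.Build R 0 Rplus
  (fun x y z => esym (Rplus_assoc x y z)) Rplus_comm Rplus_0_l.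

Lemma bigRmax_ge0 (I : Type) (s : seq I) (P : pred I) (F : I -> R) :
  0 <= \big[Rmax/0]_(i <- s | P i) F i.
Proof.
elim: s => [|x s IH]; first by rewrite big_nil; lra.
rewrite big_cons; case: (P x) => //; exact: Rle_trans IH (Rmax_r _ _).
Qed.

Lemma le_bigRmax (I : eqType) (s : seq I) (P : pred I) (F : I -> R) j :
  j \in s -> P j -> F j <= \big[Rmax/0]_(i <- s | P i) F i.
Proof.
elim: s => [|x s IH] //; rewrite inE big_cons => /orP[/eqP<- ->|js Pj].
- exact: Rmax_l.
- case: (P x); last exact: IH.
  exact: Rle_trans (IH js Pj) (Rmax_r _ _).
Qed.

Lemma le_bigRmax_in (T : finType) (A : {set T}) (F : T -> R) j :
  j \in A -> F j <= \big[Rmax/0]_(i in A) F i.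
Proof. by apply: le_bigRmax; rewrite ?mem_index_enum. Qed.

Lemma bigRmax_lub (I : Type) (s : seq I) (P : pred I) (F : I -> R) c :
  0 <= c -> (forall i, P i -> F i <= c) -> \big[Rmax/0]_(i <- s | P i) F i <= c.
Proof. by move=> c_ge0 Fc; apply: (big_ind (Rle^~ c)) => // x y; apply: Rmax_lub. Qed.

Lemma bigRmin_le (I : eqType) (s : seq I) (P : pred I) (F : I -> R) x0 j :
  j \in s -> P j -> \big[Rmin/x0]_(i <- s | P i) F i <= F j.
Proof.
elim: s => [|x s IH] //; rewrite inE big_cons => /orP[/eqP<- ->|js Pj].
- exact: Rmin_l.
- case: (P x); last exact: IH.
  exact: Rle_trans (Rmin_r _ _) (IH js Pj).
Qed.

Lemma bigRmin_glb (I : Type) (s : seq I) (P : pred I) (F : I -> R) x0 c :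
  c <= x0 -> (forall i, P i -> c <= F i) -> c <= \big[Rmin/x0]_(i <- s | P i) F i.
Proof. by move=> c_x0 cF; apply: (big_ind (Rle c)) => // x y; apply: Rmin_glb. Qed.

Lemma bigRplus_le (I : Type) (s : seq I) (F G : I -> R) :
  (forall i, F i <= G i) -> \big[Rplus/0]_(i <- s) F i <= \big[Rplus/0]_(i <- s) G i.
Proof.
move=> FG; apply: (big_ind2 Rle); [lra | move=> *; lra | move=> i _; exact: FG].
Qed.

Lemma bigRplus_mulr (I : Type) (s : seq I) (F : I -> R) c :
  \big[Rplus/0]_(i <- s) (F i * c) = (\big[Rplus/0]_(i <- s) F i) * c.
Proof.
by rewrite (big_morph (Rmult^~ c) (fun x y => Rmult_plus_distr_r x y c) (Rmult_0_l c)).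
Qed.

Lemma bigRplus_if_eq (T : finType) (X : T) (F : T -> R) :
  \big[Rplus/0]_(S : T) (if S == X then F S else 0) = F X.
Proof. by rewrite -big_mkcond big_pred1_eq. Qed.

Section Networks.
Variables (n : nat) (l r : 'I_n -> R).

Definition cut_term (S Om : {set 'I_n}) : R :=
  \big[Rmax/0]_(i in (~: S) :&: (~: Om)) l i + \big[Rmax/0]_(i in S :&: Om) r i.

Lemma cut_valueE lam Om :
  cut_value l r lam Om = \big[Rplus/0]_(S : {set 'I_n}) (lam S * cut_term S Om).
Proof. by []. Qed.

Lemma cut_term_ge0 S Om : 0 <= cut_term S Om.
Proof.
by rewrite /cut_term; apply: Rplus_le_le_0_compat; apply: bigRmax_ge0.
Qed.

Lemma min_cut_le_cut lam Om : min_cut l r lam <= cut_value l r lam Om.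
Proof. by apply: bigRmin_le; rewrite ?mem_index_enum. Qed.

Lemma cut_value_setT_le lam :
  is_schedule lam -> cut_value l r lam setT <= \big[Rmax/0]_i r i.
Proof.
move=> [lam_ge0 lam_sum]; rewrite cut_valueE.
apply: (Rle_trans _ (\big[Rplus/0]_(S : {set 'I_n}) (lam S * \big[Rmax/0]_i r i))).
- apply: bigRplus_le => S; apply: Rmult_le_compat_l => //; rewrite /cut_term.
  have -> : \big[Rmax/0]_(i in ~: S :&: ~: setT) l i = 0.
    by rewrite big_pred0 // => i; rewrite !inE andbF.
  rewrite Rplus_0_l; apply: bigRmax_lub; first exact: bigRmax_ge0.
  by move=> i _; apply: le_bigRmax; rewrite ?mem_index_enum.
- by rewrite bigRplus_mulr lam_sum Rmult_1_l; apply: Rle_refl.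
Qed.

Definition three_point_schedule (X Y Z : {set 'I_n}) (a b c : R) (S : {set 'I_n}) :=
  (if S == X then a else 0) + (if S == Y then b else 0) + (if S == Z then c else 0).

Lemma is_schedule_three_point X Y Z a b c :
  0 <= a -> 0 <= b -> 0 <= c -> a + b + c = 1 ->
  is_schedule (three_point_schedule X Y Z a b c).
Proof.
move=> a_ge0 b_ge0 c_ge0 abc; split.
- by move=> S; rewrite /three_point_schedule; do 3!case: eqP; lra.
- by rewrite !big_split /= !(bigRplus_if_eq _ (fun=> _)).
Qed.

Lemma cut_value_three_point X Y Z a b c Om :
  cut_value l r (three_point_schedule X Y Z a b c) Om
  = a * cut_term X Om + b * cut_term Y Om + c * cut_term Z Om.
Proof.
rewrite cut_valueE /three_point_schedule.
under eq_bigr => S _ do rewrite !Rmult_plus_distr_r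
  !(fun_if (Rmult^~ (cut_term S Om))) !Rmult_0_l.
by rewrite !big_split /= !(bigRplus_if_eq _ (fun S => _ * cut_term S Om)).
Qed.

Lemma min_cut_le_bigRmax_r lam :
  is_schedule lam -> min_cut l r lam <= \big[Rmax/0]_i r i.
Proof.
move=> sched_lam.
exact: Rle_trans (min_cut_le_cut lam setT) (cut_value_setT_le sched_lam).
Qed.

Lemma Cn_net_is_lub :
  is_lub (fun x => exists lam, is_schedule lam /\ x = min_cut l r lam) (Cn_net l r).
Proof.
apply: epsilon_spec.
have bounded : bound (fun x => exists lam, is_schedule lam /\ x = min_cut l r lam).
  by exists (\big[Rmax/0]_i r i) => _ [lam [sched_lam ->]]; apply: min_cut_le_bigRmax_r.
have inhabited : exists x, exists lam, is_schedule lam /\ x = min_cut l r lam.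
  pose lam0 := three_point_schedule set0 set0 set0 1 0 0.
  exists (min_cut l r lam0), lam0; split => //.
  by apply: is_schedule_three_point; lra.
by have [c lub_c] := completeness _ bounded inhabited; exists c.
Qed.

Lemma Cn_net_le_bigRmax_r : Cn_net l r <= \big[Rmax/0]_i r i.
Proof.
by apply: (proj2 Cn_net_is_lub) => _ [lam [sched_lam ->]]; apply: min_cut_le_bigRmax_r.
Qed.

Lemma min_cut_le_Cn_net lam : is_schedule lam -> min_cut l r lam <= Cn_net l r.
Proof. by move=> sched_lam; apply: (proj1 Cn_net_is_lub); exists lam. Qed.

End Networks.

Lemma cos_minus_sub_cos_plus a b : cos (a - b) - cos (a + b) = 2 * sin a * sin b.
Proof. by rewrite cos_minus cos_plus; ring. Qed.

Lemma C1_link_chords x t :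
  0 < sin t -> 0 < sin x -> 0 < cos (x - t) - cos x -> 0 < cos x - cos (x + t) ->
  C1_link (2 * sin t * sin x / (cos x - cos (x + t)))
          (2 * sin t * sin x / (cos (x - t) - cos x)) = 1.
Proof.
move=> sint_gt0 sinx_gt0 D1_gt0 D2_gt0.
have D12 : cos (x - t) - cos x + (cos x - cos (x + t)) = 2 * sin t * sin x.
  by have := cos_minus_sub_cos_plus x t; lra.
rewrite /C1_link -D12; field; repeat split; nra.
Qed.

Lemma chord_ratio_sum x t : cos x - cos (x + t) <> 0 ->
  2 * sin t * sin x / (cos x - cos (x + t))
  + 2 * sin t * sin (x + t) / (cos x - cos (x + t)) = 2 + 2 * cos t.
Proof.
move=> D_neq0; apply: (Rmult_eq_reg_r _ _ _ _ D_neq0).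
field_simplify => //; rewrite sin_plus cos_plus.
have := sin2_cos2 t; rewrite /Rsqr => pythagoras.
apply: Rminus_diag_uniq.
transitivity (2 * cos x * (sin t * sin t + cos t * cos t - 1)); first ring.
by rewrite pythagoras; ring.
Qed.

Lemma theta_pos k : 0 < theta k.
Proof.
rewrite /theta; apply: Rdiv_lt_0_compat; first by have := PI_RGT_0; lra.
by apply: lt_0_INR; lia.
Qed.

Lemma theta_period k : (2 * INR k + 3) * theta k = 2 * PI.
Proof.
rewrite /theta; have -> : (k.*2.+1 + 2 = 2 * k + 3)%N by lia.
rewrite -!plusE -!multE plus_INR mult_INR /=.
by field; have := pos_INR k; lra.
Qed.

Lemma theta_lt k : (INR k + 1) * theta k < PI.
Proof. by have := theta_period k; have := theta_pos k; have := pos_INR k; nra. Qed.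

Definition rho k := 2 + 2 * cos (theta k).

Definition pair_ell k (i : nat) :=
  2 * sin (theta k) * sin (INR i * theta k)
  / (cos (INR i * theta k) - cos ((INR i + 1) * theta k)).

Definition pair_r k (i : nat) :=
  2 * sin (theta k) * sin (INR i * theta k)
  / (cos ((INR i - 1) * theta k) - cos (INR i * theta k)).

Lemma chord_gap_pos k i : (i <= k)%N ->
  0 < cos (INR i * theta k) - cos ((INR i + 1) * theta k).
Proof.
move=> /leP/le_INR ik; have := theta_pos k; have := theta_lt k; have := pos_INR i.
by move=> *; apply/Rlt_0_minus/cos_decreasing_1; nra.
Qed.

Lemma sin_theta_mul_ge0 k i : (i <= k)%N -> 0 <= sin (INR i * theta k).
Proof.
move=> /leP/le_INR ik; have := theta_pos k; have := theta_lt k; have := pos_INR i.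
by move=> *; apply: sin_ge_0; nra.
Qed.

Lemma sin_theta_gt0 k : 0 < sin (theta k).
Proof.
have := theta_pos k; have := theta_lt k; have := pos_INR k.
by move=> *; apply: sin_gt_0; nra.
Qed.

Lemma sin_theta_mul_gt0 k i : (0 < i <= k)%N -> 0 < sin (INR i * theta k).
Proof.
case/andP=> /leP/le_INR i_ge1 /leP/le_INR ik.
have := theta_pos k; have := theta_lt k.
by move=> *; apply: sin_gt_0; rewrite /= in i_ge1; nra.
Qed.

Lemma pair_ell_0 k : pair_ell k 0 = 0.
Proof. by rewrite /pair_ell Rmult_0_l sin_0 Rmult_0_r /Rdiv Rmult_0_l. Qed.

Lemma pair_ell_ge0 k i : (i <= k)%N -> 0 <= pair_ell k i.
Proof.
move=> ik; have := chord_gap_pos ik; have := sin_theta_mul_ge0 ik.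
have := sin_theta_gt0 k.
move=> *; apply: Rmult_le_pos; first nra.
by apply/Rlt_le/Rinv_0_lt_compat.
Qed.

Lemma pair_ell_add_r k i : (i <= k)%N -> pair_ell k i + pair_r k i.+1 = rho k.
Proof.
move=> ik; have := chord_gap_pos ik.
rewrite /pair_ell /pair_r S_INR (_ : INR i + 1 - 1 = INR i); last ring.
rewrite (_ : (INR i + 1) * theta k = INR i * theta k + theta k); last ring.
by move=> gap; apply: chord_ratio_sum; lra.
Qed.

(* Node n is a virtual (k+1)-th pair: (k+1) theta = pi - theta/2 makes the
   r-formula at i = k+1 equal to 1 = r_n. *)
Lemma pair_r_last k : pair_r k k.+1 = 1.
Proof.
have := chord_gap_pos (leqnn k); have := theta_period k => period.
have eq_k : INR k * theta k = PI - theta k - theta k / 2 by lra.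
have eq_k1 : (INR k + 1) * theta k = PI - theta k + theta k / 2 by lra.
rewrite /pair_r S_INR (_ : INR k + 1 - 1 = INR k); last ring.
rewrite eq_k eq_k1 cos_minus_sub_cos_plus sin_PI_x => gap.
replace (PI - theta k + theta k / 2) with (PI - theta k / 2) by lra.
by rewrite sin_PI_x; field; have := sin_theta_gt0 k; split; nra.
Qed.

Lemma rho_ge1 k : 1 <= rho k.
Proof.
by rewrite -(pair_ell_add_r (leqnn k)) pair_r_last; have := pair_ell_ge0 (leqnn k); lra.
Qed.

Lemma pair_r_le_rho k i : (0 < i <= k.+1)%N -> pair_r k i <= rho k.
Proof.
case: i => // i /andP[_]; rewrite ltnS => ik; rewrite -(pair_ell_add_r ik).
by have := pair_ell_ge0 ik; lra.
Qed.

Lemma C1_link_pair k i : (0 < i <= k)%N -> C1_link (pair_ell k i) (pair_r k i) = 1.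
Proof.
case: i => // i /andP[_ ik].
have gap_i := chord_gap_pos (ltnW ik); have gap_i1 := chord_gap_pos ik.
have sin_i1 := sin_theta_mul_gt0 (i := i.+1) (k := k) ik.
rewrite /pair_ell /pair_r; rewrite S_INR in gap_i1 sin_i1 *.
rewrite (_ : INR i + 1 - 1 = INR i); last ring.
rewrite (_ : INR i * theta k = (INR i + 1) * theta k - theta k) in gap_i *; last ring.
rewrite (_ : (INR i + 1 + 1) * theta k = (INR i + 1) * theta k + theta k) in gap_i1; last ring.
rewrite (_ : (INR i + 1 + 1) * theta k = (INR i + 1) * theta k + theta k); last ring.
exact: C1_link_chords (sin_theta_gt0 k) sin_i1 gap_i gap_i1.
Qed.

Lemma ellN_pair k L (j : 'I_(k.*2.+1)) :
  (j < k.*2)%N -> ellN k L j = pair_ell k (j./2.+1).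
Proof. by move=> jk; rewrite /ellN ltn_eqF. Qed.

Lemma rN_pair k (j : 'I_(k.*2.+1)) : (j < k.*2)%N -> rN k j = pair_r k (j./2.+1).
Proof. by move=> jk; rewrite /rN ltn_eqF. Qed.

Lemma ellN_max k L : ellN k L ord_max = L.
Proof. by rewrite /ellN /= eqxx. Qed.

Lemma rN_max k : rN k ord_max = 1.
Proof. by rewrite /rN /= eqxx. Qed.

Lemma ord_max_of_geq_double k (j : 'I_(k.*2.+1)) : (k.*2 <= j)%N -> j = ord_max.
Proof. by move=> kj; apply: ord_inj; have := ltn_ord j; rewrite /=; lia. Qed.

Lemma half_pair_index k (j : nat) : (j < k.*2)%N -> (0 < j./2.+1 <= k)%N.
Proof. by rewrite ltnS ltn_half_double. Qed.

Lemma rN_le_rho k (j : 'I_(k.*2.+1)) : rN k j <= rho k.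
Proof.
have [jk | jk] := ltnP j k.*2.
  by rewrite rN_pair //; apply: pair_r_le_rho; have := half_pair_index jk; lia.
by rewrite (ord_max_of_geq_double jk) rN_max; apply: rho_ge1.
Qed.

Lemma C1_net_eq1 k L : (0 < k)%N -> 0 < L -> C1_net (ellN k L) (rN k) = 1.
Proof.
move=> k_gt0 L_gt0; apply: Rle_antisym.
- apply: bigRmax_lub => [|j _]; first lra.
  have [jk | jk] := ltnP j k.*2.
    by rewrite ellN_pair // rN_pair // C1_link_pair ?half_pair_index //; lra.
  rewrite (ord_max_of_geq_double jk) ellN_max rN_max /C1_link Rmult_1_r.
  by apply: (Rmult_le_reg_r (L + 1)); [lra | field_simplify; lra].
- have ord0_pair : (@ord0 k.*2 < k.*2)%N by rewrite /=; lia.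
  rewrite -[X in X <= _](C1_link_pair (half_pair_index ord0_pair)).
  rewrite -(ellN_pair L) // -rN_pair //.
  by apply: le_bigRmax; rewrite ?mem_index_enum.
Qed.

(* Chain b runs through the nodes of parity b (0-based) and ends at node n;
   its i-th node has ell = pair_ell k (i+1) and r = pair_r k (i+1). *)
Definition chain k (b : bool) (i : nat) : 'I_(k.*2.+1) := inord (minn (b + i.*2) k.*2).

Lemma chain_val k b i : (i < k)%N -> chain k b i = (b + i.*2)%N :> nat.
Proof. by move=> ik; rewrite /chain; rewrite inordK; case: b; lia. Qed.

Lemma chain_last k b : chain k b k = ord_max.
Proof. by apply: ord_inj; rewrite /chain; rewrite inordK /=; case: b; lia. Qed.

Lemma ellN_chain k L b i : (i < k)%N -> ellN k L (chain k b i) = pair_ell k i.+1.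
Proof.
move=> ik; rewrite ellN_pair chain_val //; last by case: b; lia.
by rewrite half_bit_double.
Qed.

Lemma rN_chain k b i : (i <= k)%N -> rN k (chain k b i) = pair_r k i.+1.
Proof.
rewrite leq_eqVlt => /orP[/eqP-> | ik]; first by rewrite chain_last rN_max pair_r_last.
rewrite rN_pair chain_val //; last by case: b; lia.
by rewrite half_bit_double.
Qed.

Lemma odd_chain k b i : (i < k)%N -> odd (chain k b i) = b.
Proof. by move=> ik; rewrite chain_val // oddD odd_double addbF oddb. Qed.

(* Take the first chain node in Omega, node n counting as one: its r-link is
   cut, and so is the ell-link of its predecessor, which lies outside Omega. *)
Lemma chain_cut_ge k L b (Om Ls Rs : {set 'I_(k.*2.+1)}) :
  (forall i, (i < k)%N -> chain k b i \in Om -> chain k b i \in Rs) ->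
  (forall i, (i < k)%N -> chain k b i \notin Om -> chain k b i \in Ls) ->
  ord_max \in Rs ->
  rho k <= \big[Rmax/0]_(j in Ls) ellN k L j + \big[Rmax/0]_(j in Rs) rN k j.
Proof.
move=> in_Rs in_Ls max_Rs.
pose first_in i := (k <= i)%N || (chain k b i \in Om).
have first_k : first_in k by rewrite /first_in leqnn.
have [m first_m min_m] := ex_minnP (ex_intro first_in k first_k).
have mk : (m <= k)%N := min_m k first_k.
have r_cut : pair_r k m.+1 <= \big[Rmax/0]_(j in Rs) rN k j.
  rewrite -(rN_chain b mk); apply: le_bigRmax_in.
  have [km | mk'] := leqP k m.
    have -> : m = k by lia.
    by rewrite chain_last.
  by apply: in_Rs; rewrite // /first_in leqNgt mk' in first_m.
have ell_cut : pair_ell k m <= \big[Rmax/0]_(j in Ls) ellN k L j.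
  case: m first_m min_m mk {r_cut} => [|m] _ min_m mk.
    by rewrite pair_ell_0; apply: bigRmax_ge0.
  have not_first : ~~ first_in m by apply/negP => /min_m; rewrite ltnn.
  move: not_first; rewrite /first_in negb_or -ltnNge => /andP[mk' notin_Om].
  by rewrite -(ellN_chain L b mk'); apply/le_bigRmax_in/in_Ls.
by rewrite -(pair_ell_add_r mk); lra.
Qed.

Lemma chain_neq_max k b i : (i < k)%N -> chain k b i != ord_max.
Proof. by move=> ik; apply/eqP => /(congr1 val); rewrite /= chain_val //; case: b; lia. Qed.

(* In the paper's 1-based numbering, X holds the odd-indexed nodes and Y the
   even-indexed ones; both contain node n. *)
Definition X_nodes k : {set 'I_(k.*2.+1)} := [set j : 'I_(k.*2.+1) | ~~ odd j].
Definition Y_nodes k : {set 'I_(k.*2.+1)} := [set j : 'I_(k.*2.+1) | odd j || (j == ord_max)].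

(* Each chain has its r-links cut in one state and its ell-links in the other. *)
Lemma cut_terms_XY_ge k L (Om : {set 'I_(k.*2.+1)}) : ord_max \in Om ->
  2 * rho k <= cut_term (ellN k L) (rN k) (X_nodes k) Om
               + cut_term (ellN k L) (rN k) (Y_nodes k) Om.
Proof.
move=> max_Om.
suff [chainX chainY] :
  rho k <= \big[Rmax/0]_(j in ~: Y_nodes k :&: ~: Om) ellN k L j
           + \big[Rmax/0]_(j in X_nodes k :&: Om) rN k j /\
  rho k <= \big[Rmax/0]_(j in ~: X_nodes k :&: ~: Om) ellN k L j
           + \big[Rmax/0]_(j in Y_nodes k :&: Om) rN k j.
  by rewrite /cut_term; lra.
split; [apply: (@chain_cut_ge _ _ false Om) | apply: (@chain_cut_ge _ _ true Om)];
  try move=> i ik Om_i;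
  rewrite !inE ?odd_chain ?odd_double ?max_Om ?Om_i ?eqxx ?chain_neq_max ?orbT //.
Qed.

Lemma cut_term_set0_ge k L (Om : {set 'I_(k.*2.+1)}) : ord_max \notin Om ->
  L <= cut_term (ellN k L) (rN k) set0 Om.
Proof.
move=> max_Om; rewrite /cut_term.
have := @le_bigRmax_in _ (~: set0 :&: ~: Om) (ellN k L) ord_max.
rewrite !inE max_Om ellN_max => /(_ isT).
by have := bigRmax_ge0 (index_enum 'I_(k.*2.+1)) (fun j => j \in set0 :&: Om) (rN k); lra.
Qed.

(* Silence (S empty) with probability d makes every cut avoiding node n pay
   d L through the link ell_n = L. *)
Definition alternating_schedule k d :=
  three_point_schedule (X_nodes k) (Y_nodes k) set0 ((1 - d) / 2) ((1 - d) / 2) d.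
Arguments alternating_schedule : clear implicits.

Lemma min_cut_alternating_ge k L d : 0 <= d <= 1 -> (1 - d) * rho k <= d * L ->
  (1 - d) * rho k <= min_cut (ellN k L) (rN k) (alternating_schedule k d).
Proof.
move=> d01 dL.
have cut_ge Om : (1 - d) * rho k <= cut_value (ellN k L) (rN k) (alternating_schedule k d) Om.
  rewrite cut_value_three_point.
  have := cut_term_ge0 (ellN k L) (rN k) (X_nodes k) Om.
  have := cut_term_ge0 (ellN k L) (rN k) (Y_nodes k) Om.
  have := cut_term_ge0 (ellN k L) (rN k) set0 Om.
  by case: (boolP (ord_max \in Om)) => [/(cut_terms_XY_ge L)|/(cut_term_set0_ge L)]; nra.
by apply: bigRmin_glb => // Om _.
Qed.

Lemma Cn_net_le_rho k L : Cn_net (ellN k L) (rN k) <= rho k.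
Proof.
apply: Rle_trans (Cn_net_le_bigRmax_r _ _) _.
by apply: bigRmax_lub => [|j _]; [have := rho_ge1 k; lra | apply: rN_le_rho].
Qed.

Lemma Cn_net_ge k L d : 0 <= d <= 1 -> (1 - d) * rho k <= d * L ->
  (1 - d) * rho k <= Cn_net (ellN k L) (rN k).
Proof.
move=> d01 dL; apply: Rle_trans (min_cut_alternating_ge d01 dL) _.
by apply: min_cut_le_Cn_net; apply: is_schedule_three_point; lra.
Qed.

Definition tends_pinfty (f : R -> R) (c : R) :=
  forall eps, 0 < eps -> exists M, forall L, M < L -> Rabs (f L - c) < eps.

Lemma tends_pinfty_eq f g c M0 :
  (forall L, M0 < L -> f L = g L) -> tends_pinfty f c -> tends_pinfty g c.
Proof.
move=> fg f_c eps eps_gt0; have [M fM] := f_c eps eps_gt0.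
exists (Rmax M0 M) => L /Rmax_Rlt[M0L ML]; rewrite -fg //; exact: fM.
Qed.

Lemma tends_pinfty_inv f c :
  0 < c -> tends_pinfty f c -> tends_pinfty (fun L => 1 / f L) (1 / c).
Proof.
move=> c_gt0 f_c eps eps_gt0.
have cc_gt0 : 0 < c / 2 * c by apply: Rmult_lt_0_compat; lra.
have e_gt0 : 0 < Rmin (c / 2) (eps * (c / 2 * c)) by apply: Rmin_glb_lt; [lra | apply: Rmult_lt_0_compat].
have e_le1 := Rmin_l (c / 2) (eps * (c / 2 * c)).
have e_le2 := Rmin_r (c / 2) (eps * (c / 2 * c)).
move: (Rmin _ _) e_gt0 e_le1 e_le2 => e e_gt0 e_le1 e_le2.
have [M fM] := f_c e e_gt0; exists M => L close; have := fM L close.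
move=> {}close; have [hi lo] := Rabs_def2 _ _ close.
have fc_gt : c / 2 * c < f L * c by apply: Rmult_lt_compat_r; lra.
have := Rmult_lt_compat_l eps _ _ eps_gt0 fc_gt => eps_fc.
rewrite (_ : 1 / f L - 1 / c = (c - f L) * / (f L * c)); last by field; lra.
rewrite Rabs_mult Rabs_inv (Rabs_pos_eq (f L * c)); last lra.
apply: (Rmult_lt_reg_r (f L * c)); first lra.
by rewrite Rmult_assoc Rinv_l ?Rmult_1_r 1?Rabs_minus_sym; lra.
Qed.

Lemma Cn_net_tends k : tends_pinfty (fun L => Cn_net (ellN k L) (rN k)) (rho k).
Proof.
move=> eps eps_gt0; have rho1 := rho_ge1 k.
have d_gt0 : 0 < Rmin (1 / 2) (eps / (2 * rho k)).
  by apply: Rmin_glb_lt; [lra | apply: Rdiv_lt_0_compat; lra].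
have d_half := Rmin_l (1 / 2) (eps / (2 * rho k)).
have d_eps := Rmin_r (1 / 2) (eps / (2 * rho k)).
move: (Rmin _ _) d_gt0 d_half d_eps => d d_gt0 d_half d_eps.
have {}d_eps : d * rho k <= eps / 2.
  rewrite (_ : eps / 2 = eps / (2 * rho k) * rho k); last by field; lra.
  by apply: Rmult_le_compat_r; lra.
have drho_ge0 : 0 <= d * rho k by apply: Rmult_le_pos; lra.
exists (rho k / d) => L /(Rmult_lt_compat_r d _ _ d_gt0).
rewrite (_ : rho k / d * d = rho k); last by field; lra.
move=> dL; have := Cn_net_le_rho k L.
have := @Cn_net_ge k L d ltac:(lra) ltac:(lra).
by move=> *; apply: Rabs_def1; lra.
Qed.

Theorem mainTheorem9 (k : nat) (hk : (1 <= k)%nat) :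
  (forall j : 'I_(k.*2.+1), forall L, (val j < k.*2)%nat ->
       C1_link (ellN k L j) (rN k j) = 1)
  /\ (forall L, 0 < L -> C1_net (ellN k L) (rN k) = 1)
  /\ rN k ord0 = 2 + 2 * cos (theta k)
  /\ (forall L, 0 < L -> Cn_net (ellN k L) (rN k) <= rN k ord0)
  /\ (forall eps, 0 < eps -> exists M, forall L, M < L ->
        Rabs (Cn_net (ellN k L) (rN k) - (2 + 2 * cos (theta k))) < eps)
  /\ (forall eps, 0 < eps -> exists M, forall L, M < L ->
        Rabs (C1_net (ellN k L) (rN k) / Cn_net (ellN k L) (rN k)
              - 1 / (2 + 2 * cos (theta k))) < eps).
Proof.
have ord0_pair : (@ord0 k.*2 < k.*2)%N by rewrite /=; lia.
have r_ord0 : rN k ord0 = rho k.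
  by rewrite rN_pair // -(pair_ell_add_r (leq0n k)) pair_ell_0 Rplus_0_l.
have rho_gt0 : 0 < rho k by have := rho_ge1 k; lra.
split; [|split; [|split; [|split; [|split]]]].
- by move=> j L jk; rewrite ellN_pair // rN_pair //; apply/C1_link_pair/half_pair_index.
- by move=> L; apply: C1_net_eq1.
- exact: r_ord0.
- by move=> L _; rewrite r_ord0; apply: Cn_net_le_rho.
- exact: Cn_net_tends.
- apply: (tends_pinfty_eq (M0 := 0) _ (tends_pinfty_inv rho_gt0 (Cn_net_tends k))) => L L_gt0.
  by rewrite C1_net_eq1.
Qed.
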